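(* Let $\Lambda$ be a strongly connected finite $k$-graph. (1) Let $m,n,p,q\in\mathbb{N}^k$ and suppose $\sigma^m(x)=\sigma^n(x)$ for all $x\in\Lambda^\infty$. If $p-q=m-n$, then $\sigma^p(x)=\sigma^q(x)$ for all $x\in\Lambda^\infty$. (2) The set $\operatorname{Per}\Lambda:=\{m-n:m,n\in\mathbb{N}^k,\ \sigma^m(x)=\sigma^n(x)\text{ for all }x\in\Lambda^\infty\}$ is a subgroup of $\mathbb{Z}^k$. (3) Suppose $m,n\in\mathbb{N}^k$ with $m-n\in\operatorname{Per}\Lambda$ and $\mu\in\Lambda^m$. Then $\theta_{d(\alpha)+m,\,d(\alpha)+n}(\alpha\mu)=\alpha\theta_{m,n}(\mu)$ for all $\alpha\in\Lambda r(\mu)$, and $\theta_{m+d(\beta),\,n+d(\beta)}(\mu\beta)=\theta_{m,n}(\mu)\beta$ for all $\beta\in s(\mu)\Lambda$.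
   Context: A $k$-graph is a countable category $\Lambda$ with a functor $d:\Lambda\to\mathbb{N}^k$ such that whenever $d(\lambda)=m+n$ there are unique $\mu,\nu$ with $d(\mu)=m$, $d(\nu)=n$, $\lambda=\mu\nu$. $\Lambda^n=d^{-1}(n)$, $\Lambda^0$ = vertices, $r,s$ range and source; $\Lambda v=\{\lambda:s(\lambda)=v\}$, $v\Lambda=\{\lambda:r(\lambda)=v\}$. Standing convention: $\Lambda^{e_i}\neq\emptyset$ for each $i$. Finite: each $\Lambda^n$ finite; strongly connected: $v\Lambda w\neq\emptyset$ for all vertices $v,w$. Infinite paths: $\Omega_k=\{(m,n)\in\mathbb{N}^k\times\mathbb{N}^k:m\le n\}$ is a $k$-graph with $r(m,n)=(m,m)$, $s(m,n)=(n,n)$, $(m,n)(n,p)=(m,p)$, $d(m,n)=n-m$. An infinite path is a degree-preserving functor $x:\Omega_k\to\Lambda$; $\Lambda^\infty$ is the set of these; $r(x)=x(0,0)$; $\sigma^n(x)(p,q)=x(n+p,n+q)$; for $s(\lambda)=r(x)$, $\lambda x$ is the unique infinite path with $(\lambda x)(0,d(\lambda))=\lambda$, $\sigma^{d(\lambda)}(\lambda x)=x$; $Z(\lambda)=\{x:x(0,d(\lambda))=\lambda\}$. For $m,n\in\mathbb{N}^k$ with $\sigma^m(x)=\sigma^n(x)$ for all $x\in\Lambda^\infty$ and $\mu\in\Lambda^m$, $\theta_{m,n}(\mu)$ denotes the unique element of $\Lambda^n$ such that $\mu x=\theta_{m,n}(\mu)x$ for all $x\in Z(s(\mu))$ (in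 part (3), (1) guarantees the relevant pairs of degrees satisfy this). *)

From HB Require Import structures.
From mathcomp Require Import all_boot all_order all_algebra.
From Stdlib Require Import ClassicalEpsilon.
Set Implicit Arguments. Unset Strict Implicit. Unset Printing Implicit Defensive.
Import GRing.Theory.

Definition NN (k : nat) := {ffun 'I_k -> nat}.
Definition ZZ (k : nat) := {ffun 'I_k -> int}.

Definition zeroN k : NN k := [ffun => 0%N].
Definition addN k (m n : NN k) : NN k := [ffun i => (m i + n i)%N].
(* truncated pointwise subtraction; only used when m <= n pointwise *)
Definition subN k (n m : NN k) : NN k := [ffun i => (n i - m i)%N].
Definition leN k (m n : NN k) : Prop := forall i, (m i <= n i)%N.
Definition unitN k (i : 'I_k) : NN k := [ffun j => nat_of_bool (i == j)].
Definition diffZ k (m n : NN k) : ZZ k := [ffun i => ((m i)%:Z - (n i)%:Z)%R].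

(* Composition is total but only constrained on composable pairs
   (src f = rng g); kcomp f g is the composite "f g". *)
Record kgraph (k : nat) := KGraph {
  vert : countType;
  mor : countType;
  rng : mor -> vert;
  src : mor -> vert;
  idm : vert -> mor;
  kcomp : mor -> mor -> mor;
  deg : mor -> NN k;
  rng_idm : forall v, rng (idm v) = v;
  src_idm : forall v, src (idm v) = v;
  rng_comp : forall f g, src f = rng g -> rng (kcomp f g) = rng f;
  src_comp : forall f g, src f = rng g -> src (kcomp f g) = src g;
  comp_idl : forall f, kcomp (idm (rng f)) f = f;
  comp_idr : forall f, kcomp f (idm (src f)) = f;
  comp_assoc : forall f g h, src f = rng g -> src g = rng h ->
      kcomp f (kcomp g h) = kcomp (kcomp f g) h;
  deg_idm : forall v, deg (idm v) = zeroN k;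
  deg_comp : forall f g, src f = rng g -> deg (kcomp f g) = addN (deg f) (deg g);
  factorisation : forall l m n, deg l = addN m n ->
      exists! p : mor * mor,
        [/\ src p.1 = rng p.2, deg p.1 = m, deg p.2 = n & l = kcomp p.1 p.2]
}.

Section KG.
Variables (k : nat) (L : kgraph k).
Local Notation mor := (mor L).
Local Notation vert := (vert L).

Definition finite_kgraph : Prop :=
  forall n : NN k, exists s : seq mor, forall l, deg l = n -> l \in s.

Definition strongly_connected : Prop :=
  forall v w : vert, exists l : mor, rng l = v /\ src l = w.

(* standing convention: Lambda^{e_i} nonempty *)
Definition no_empty_colours : Prop :=
  forall i : 'I_k, exists l : mor, deg l = unitN i.

(* An infinite path: a degree-preserving functor Omega_k -> Lambda, given by
   its action x m n on the morphisms (m,n), m <= n, of Omega_k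
   (values at pairs with ~ m <= n are irrelevant). *)
Definition infpath (x : NN k -> NN k -> mor) : Prop :=
  [/\ forall m n, leN m n -> deg (x m n) = subN n m,
      forall m, x m m = idm (rng (x m m)) &
      forall m n p, leN m n -> leN n p ->
        src (x m n) = rng (x n p) /\ x m p = kcomp (x m n) (x n p)].

(* equality of infinite paths (as functors, i.e. on all morphisms of Omega_k) *)
Definition path_eq (x y : NN k -> NN k -> mor) : Prop :=
  forall p q, leN p q -> x p q = y p q.

(* sigma^m(x) = sigma^n(x) *)
Definition shift_eq (x : NN k -> NN k -> mor) (m n : NN k) : Prop :=
  forall p q, leN p q -> x (addN m p) (addN m q) = x (addN n p) (addN n q).

(* y is the infinite path l x : y(0, d l) = l and sigma^{d l}(y) = x *)
Definition is_concat (l : mor) (x y : NN k -> NN k -> mor) : Prop :=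
  [/\ infpath y, y (zeroN k) (deg l) = l &
      forall p q, leN p q -> y (addN (deg l) p) (addN (deg l) q) = x p q].

Definition periodic_pair (m n : NN k) : Prop :=
  forall x, infpath x -> shift_eq x m n.

Definition Per (z : ZZ k) : Prop :=
  exists m n : NN k, z = diffZ m n /\ periodic_pair m n.

Definition is_subgroup (P : ZZ k -> Prop) : Prop :=
  P 0%R /\ forall a b, P a -> P b -> P (a - b)%R.

(* defining property of theta_{m,n}(mu): an element t of Lambda^n with
   mu x = t x for all x in Z(s(mu)) *)
Definition theta_prop (m n : NN k) (mu t : mor) : Prop :=
  deg t = n /\
  forall x, infpath x -> rng (x (zeroN k) (zeroN k)) = src mu ->
    exists y z, [/\ is_concat mu x y, is_concat t x z & path_eq y z].

(* theta_{m,n}(mu): "the unique element" with the defining property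
   (chosen by Hilbert's epsilon; its existence/uniqueness is part of what
   must be proved when using it). *)
Definition theta (m n : NN k) (mu : mor) : mor :=
  epsilon (inhabits mu) (theta_prop m n mu).

End KG.
Arguments theta {k} L m n mu.

From mathcomp Require Import all_boot all_order all_algebra zify.
From Stdlib Require Import ClassicalEpsilon.
Set Implicit Arguments. Unset Strict Implicit. Unset Printing Implicit Defensive.

(* Write [l x] for the infinite path x prefixed by l.  If sigma^m = sigma^n and
   d(l) = c, then sigma^(m+c) and sigma^(n+c) agree on every [l x]; conversely,
   since every vertex is the source of paths of every degree, agreement after
   adding c can be cancelled.  Hence periodicity of (m, n) depends only on
   m - n, and Per is a group.  For (3), theta_{m,n}(mu) = t is characterised
   by mu x(0, n + q) = t x(0, m + q) for every infinite path x at s(mu) and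
   every q; this identity is stable under prefixing alpha and, writing x as
   [beta x'], under suffixing beta.  A witness is t = (mu x0)(0, n) for any
   single x0, because periodicity makes (mu x)(0, n) determined by
   (mu x)(0, m) = mu. *)

Ltac solve_NN_eq :=
  let i := fresh "i" in apply/ffunP => i;
  repeat match goal with H : leN _ _ |- _ => move: (H i); clear H end;
  rewrite ?ffunE /=; lia.
Ltac solve_leN :=
  let i := fresh "i" in move=> i;
  repeat match goal with H : leN _ _ |- _ => move: (H i); clear H end;
  rewrite ?ffunE /=; lia.

Section NNOrder.
Variable k : nat.
Implicit Types a b c q : NN k.

Lemma le0N q : leN (zeroN k) q.
Proof. by move=> i; rewrite ffunE. Qed.

Lemma leNN q : leN q q.
Proof. by []. Qed.

Lemma leN_trans a b c : leN a b -> leN b c -> leN a c.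
Proof. by move=> ? ?; solve_leN. Qed.

Lemma leN_addl a q : leN q (addN a q).
Proof. by solve_leN. Qed.

Lemma leN_addr a q : leN a (addN a q).
Proof. by solve_leN. Qed.

Lemma addN0 a : addN a (zeroN k) = a.
Proof. by solve_NN_eq. Qed.

Lemma subN0 a : subN a (zeroN k) = a.
Proof. by solve_NN_eq. Qed.

End NNOrder.

Section Factorisation.
Variables (k : nat) (L : kgraph k).
Local Notation mor := (mor L).
Local Notation z0 := (zeroN k).
Implicit Types (f g h : mor) (p q : NN k).

Lemma kcomp_inj g h g' h' : src g = rng h -> src g' = rng h' ->
  deg g = deg g' -> deg h = deg h' -> kcomp g h = kcomp g' h' -> g = g' /\ h = h'.
Proof.
move=> gh gh' dg dh e.
have [gh0 [_ uniq]] := factorisation (deg_comp gh).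
have := uniq (g', h') (And4 gh' (esym dg) (esym dh) e).
by rewrite (uniq (g, h) (And4 gh erefl erefl erefl)) => -[-> ->].
Qed.

Lemma deg0_idm f : deg f = z0 -> f = idm (rng f).
Proof.
move=> df; have [-> //] : idm (rng f) = f /\ f = idm (src f).
apply: kcomp_inj; rewrite ?src_idm ?rng_idm ?deg_idm ?df //.
by rewrite comp_idl comp_idr.
Qed.

Lemma factor_exists f p q : deg f = addN p q -> exists g h,
  [/\ src g = rng h, deg g = p, deg h = q & f = kcomp g h].
Proof. by case/factorisation => -[g h] [[/= ? ? ? ?] _]; exists g, h. Qed.

Definition factor f p q : mor * mor :=
  epsilon (inhabits (f, f))
   (fun gh => [/\ src gh.1 = rng gh.2, deg gh.1 = p, deg gh.2 = q
               & f = kcomp gh.1 gh.2]).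

Lemma factorP f p q : deg f = addN p q ->
  [/\ src (factor f p q).1 = rng (factor f p q).2, deg (factor f p q).1 = p,
      deg (factor f p q).2 = q & f = kcomp (factor f p q).1 (factor f p q).2].
Proof.
case/factor_exists => g [h fgh]; rewrite /factor.
apply: (epsilon_spec _ (fun gh : mor * mor =>
  [/\ src gh.1 = rng gh.2, deg gh.1 = p, deg gh.2 = q & f = kcomp gh.1 gh.2])).
by exists (g, h).
Qed.

Lemma factor_kcomp g h : src g = rng h -> factor (kcomp g h) (deg g) (deg h) = (g, h).
Proof.
move=> gh; have [] := factorP (deg_comp gh).
case: factor => g' h' /= gh' dg dh e.
by have [-> ->] := kcomp_inj gh' gh dg dh (esym e).
Qed.

(* The segment f(p, q) of the paper: cut f at q, then cut that prefix at p. *)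
Definition seg f p q : mor :=
  (factor (factor f q (subN (deg f) q)).1 p (subN q p)).2.

Lemma segE f a g c p q : src a = rng g -> src g = rng c ->
  deg a = p -> deg g = subN q p -> leN p q ->
  f = kcomp (kcomp a g) c -> seg f p q = g.
Proof.
move=> ag gc da dg pq ->.
have agc : src (kcomp a g) = rng c by rewrite src_comp.
have dag : deg (kcomp a g) = q by rewrite deg_comp // da dg; solve_NN_eq.
have dc : deg c = subN (deg (kcomp (kcomp a g) c)) q.
  by rewrite deg_comp // dag; solve_NN_eq.
by rewrite /seg -{1}dag -dc factor_kcomp //= -dg -da factor_kcomp.
Qed.

Lemma segP f p q : leN p q -> leN q (deg f) -> exists a c,
  [/\ src a = rng (seg f p q), src (seg f p q) = rng c, deg a = p,
      deg (seg f p q) = subN q p & f = kcomp (kcomp a (seg f p q)) c].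
Proof.
move=> pq qf.
have dfq : deg f = addN q (subN (deg f) q) by solve_NN_eq.
have [sF1 dF1 _ eF] := factorP dfq.
set F := factor f q _ in sF1 dF1 eF *.
have dF1' : deg F.1 = addN p (subN q p) by rewrite dF1; solve_NN_eq.
have [sG1 dG1 dG2 eG] := factorP dF1'.
set G := factor F.1 p _ in sG1 dG1 dG2 eG *.
exists G.1, F.2; split=> //.
- by rewrite -sF1 eG src_comp.
- by rewrite -eG.
Qed.

Lemma seg_deg f p q : leN p q -> leN q (deg f) -> deg (seg f p q) = subN q p.
Proof. by move=> pq qf; have [a [c [_ _ _ -> _]]] := segP pq qf. Qed.

Lemma seg_full f : seg f z0 (deg f) = f.
Proof.
apply: (segE (a := idm (rng f)) (c := idm (src f))).
all: rewrite ?src_idm ?rng_idm ?deg_idm ?subN0 ?comp_idl ?comp_idr //.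
exact: le0N.
Qed.

Lemma seg_kcomp_left f g p q : src f = rng g -> leN p q -> leN q (deg f) ->
  seg (kcomp f g) p q = seg f p q.
Proof.
move=> fg pq qf; have [a [c [sa sc da ds ef]]] := segP pq qf.
have sc_f : src c = src f by rewrite [in RHS]ef !src_comp.
apply: (segE (a := a) (c := kcomp c g)) => //.
- by rewrite rng_comp ?sc_f.
- by rewrite {1}ef -comp_assoc ?src_comp ?sc_f.
Qed.

Lemma seg_kcomp_right f g p q : src f = rng g -> leN p q -> leN q (deg g) ->
  seg (kcomp f g) (addN (deg f) p) (addN (deg f) q) = seg g p q.
Proof.
move=> fg pq qg; have [a [c [sa sc da ds eg]]] := segP pq qg.
have ra : rng a = rng g by rewrite {1}eg !rng_comp ?src_comp.
apply: (segE (a := kcomp f a) (c := c)) => //.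
- by rewrite src_comp ?ra.
- by rewrite deg_comp ?ra // da.
- by rewrite ds; solve_NN_eq.
- by solve_leN.
- by rewrite {1}eg !comp_assoc ?rng_comp ?src_comp ?ra.
Qed.

Lemma seg_split f m n p : leN m n -> leN n p -> leN p (deg f) ->
  src (seg f m n) = rng (seg f n p) /\ seg f m p = kcomp (seg f m n) (seg f n p).
Proof.
move=> mn np pf; have mp : leN m p := leN_trans mn np.
have [a [c [sa sc da ds ef]]] := segP mp pf.
have dsplit : deg (seg f m p) = addN (subN n m) (subN p n) by rewrite ds; solve_NN_eq.
have [g [h [gh dg dh es]]] := factor_exists dsplit.
have rg : rng g = rng (seg f m p) by rewrite es rng_comp.
have sh : src h = src (seg f m p) by rewrite es src_comp.
have -> : seg f m n = g.
  apply: (segE (a := a) (c := kcomp h c)) => //; first by rewrite rg.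
  - by rewrite rng_comp // sh.
  - by rewrite {1}ef es -!comp_assoc ?src_comp ?rng_comp ?rg ?sh.
have -> : seg f n p = h.
  apply: (segE (a := kcomp a g) (c := c)) => //.
  - by rewrite src_comp ?rg.
  - by rewrite sh.
  - by rewrite deg_comp ?rg // da dg; solve_NN_eq.
  - by rewrite {1}ef es comp_assoc ?rg.
by rewrite -es.
Qed.

Lemma rng_seg0 f q : leN q (deg f) -> rng (seg f z0 q) = rng f.
Proof.
move=> qf; have [a [c [sa sc da _ ef]]] := segP (le0N q) qf.
rewrite [in RHS]ef !rng_comp ?src_comp // -sa (deg0_idm da).
by rewrite src_idm rng_idm.
Qed.

End Factorisation.

Section InfinitePaths.
Variables (k : nat) (L : kgraph k).
Local Notation mor := (mor L).
Local Notation z0 := (zeroN k).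
Implicit Types (l M t : mor) (a b m n p q : NN k) (x y z : NN k -> NN k -> mor).

Lemma infpath_deg x m n : infpath x -> leN m n -> deg (x m n) = subN n m.
Proof. by case=> + _ _; apply. Qed.

Lemma infpath_comp x m n p : infpath x -> leN m n -> leN n p ->
  src (x m n) = rng (x n p) /\ x m p = kcomp (x m n) (x n p).
Proof. by case=> _ _; apply. Qed.

Lemma infpath_rng x q : infpath x -> rng (x z0 q) = rng (x z0 z0).
Proof.
by move=> xP; have [s ->] := infpath_comp xP (leNN z0) (le0N q); rewrite rng_comp.
Qed.

Lemma infpath_seg x p q r : infpath x -> leN p q -> leN q r ->
  seg (x z0 r) p q = x p q.
Proof.
move=> xP pq qr; have p_r := leN_trans pq qr.
have [s0r e0r] := infpath_comp xP (le0N p) p_r.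
have [sqr eqr] := infpath_comp xP pq qr.
have [s0q _] := infpath_comp xP (le0N p) pq.
apply: (segE (a := x z0 p) (c := x q r)) => //.
- by rewrite infpath_deg ?subN0 //; apply: le0N.
- by rewrite infpath_deg.
- by rewrite e0r eqr comp_assoc // -s0r eqr rng_comp.
Qed.

Lemma path_eq_of_init x y : infpath x -> infpath y ->
  (forall q, exists2 r, leN q r & x z0 r = y z0 r) -> path_eq x y.
Proof.
move=> xP yP xy.
have init q : x z0 q = y z0 q.
  have [r qr exy] := xy q.
  by rewrite -(infpath_seg xP (le0N q) qr) -(infpath_seg yP (le0N q) qr) exy.
move=> p q pq.
by rewrite -(infpath_seg xP pq (leNN q)) -(infpath_seg yP pq (leNN q)) init.
Qed.

Lemma is_concat_init l x y q : is_concat l x y -> infpath x ->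
  src l = rng (x z0 q) /\ y z0 (addN (deg l) q) = kcomp l (x z0 q).
Proof.
case=> yP y0 ys xP.
have [s e] := infpath_comp yP (le0N (deg l)) (leN_addr (deg l) q).
have ylq : y (deg l) (addN (deg l) q) = x z0 q by rewrite -ys ?addN0 //; apply: le0N.
by rewrite y0 ylq in s e.
Qed.

Definition concat_path l x : NN k -> NN k -> mor :=
  fun p q => seg (kcomp l (x z0 q)) p q.

Lemma concat_pathP l x : infpath x -> src l = rng (x z0 z0) ->
  is_concat l x (concat_path l x).
Proof.
move=> xP lx.
have lxq q : src l = rng (x z0 q) by rewrite infpath_rng.
have q_lxq q : leN q (deg (kcomp l (x z0 q))).
  by rewrite deg_comp // infpath_deg ?subN0 //; [apply: leN_addl | apply: le0N].
have restrict p q r : leN p q -> leN q r ->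
    seg (kcomp l (x z0 r)) p q = seg (kcomp l (x z0 q)) p q.
  move=> pq qr; have [s ->] := infpath_comp xP (le0N q) qr.
  by rewrite comp_assoc // seg_kcomp_left ?src_comp.
split.
- split=> [m n mn | m | m n p mn np]; rewrite /concat_path.
  + exact: seg_deg.
  + by apply: deg0_idm; rewrite seg_deg //; solve_NN_eq.
  + by rewrite -(restrict m n p mn np); apply: seg_split.
- by rewrite /concat_path seg_kcomp_left ?seg_full //; apply: le0N.
- move=> p q pq; rewrite /concat_path seg_kcomp_right //.
  + exact: infpath_seg (leN_addl _ _).
  + by rewrite infpath_deg ?subN0 //; [apply: leN_addl | apply: le0N].
Qed.

Lemma periodic_pair_sym m n : periodic_pair L m n -> periodic_pair L n m.
Proof. by move=> mn x xP p q pq; rewrite mn. Qed.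

Lemma periodic_concat_shift l x y m n q : periodic_pair L m n ->
  is_concat l x y -> deg l = m -> y n (addN n q) = x z0 q.
Proof.
move=> mn [yP _ ys] dl.
have := mn y yP z0 q (le0N q); rewrite !addN0 => <-.
by rewrite -dl -{1}(addN0 (deg l)) ys //; apply: le0N.
Qed.

Lemma periodic_pair_trans m n p :
  periodic_pair L m n -> periodic_pair L n p -> periodic_pair L m p.
Proof. by move=> mn np x xP r s rs; rewrite mn // np. Qed.

Lemma periodic_pair_addr m n p : periodic_pair L m n ->
  periodic_pair L (addN m p) (addN n p).
Proof.
move=> mn x xP r s rs.
have shift a u : addN (addN a p) u = addN a (addN p u) by solve_NN_eq.
by rewrite !shift mn //; solve_leN.
Qed.

Lemma Per_subgroup : is_subgroup (Per L).
Proof.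
split; first by exists z0, z0; split=> [|x _ p q _ //]; apply/ffunP => i; rewrite !ffunE.
move=> _ _ [m1 [n1 [-> mn1]]] [m2 [n2 [-> mn2]]].
exists (addN m1 n2), (addN n1 m2); split; first by apply/ffunP => i; rewrite !ffunE /=; lia.
apply: (periodic_pair_trans (n := addN n1 n2)); first exact: periodic_pair_addr.
have -> : addN n1 n2 = addN n2 n1 by solve_NN_eq.
have -> : addN n1 m2 = addN m2 n1 by solve_NN_eq.
exact/periodic_pair_addr/periodic_pair_sym.
Qed.

Lemma theta_prop_kcomp a b M t x Q : theta_prop a b M t ->
  infpath x -> rng (x z0 z0) = src M ->
  src t = rng (x z0 (addN (deg M) Q)) /\
  kcomp M (x z0 (addN b Q)) = kcomp t (x z0 (addN (deg M) Q)).
Proof.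
move=> [dt tP] xP xM; have [y [z [Y Z yz]]] := tP x xP xM.
have [_ eM] := is_concat_init (addN b Q) Y xP.
have [st et] := is_concat_init (addN (deg M) Q) Z xP.
split=> //; rewrite -eM -et dt.
have -> : addN b (addN (deg M) Q) = addN (deg M) (addN b Q) by solve_NN_eq.
by rewrite yz //; apply: le0N.
Qed.

Lemma theta_propI a b M t : deg t = b -> src t = src M ->
  (forall x, infpath x -> rng (x z0 z0) = src M -> forall Q,
     kcomp M (x z0 (addN b Q)) = kcomp t (x z0 (addN (deg M) Q))) ->
  theta_prop a b M t.
Proof.
move=> dt tM Mt; split=> // x xP xM.
have tx : src t = rng (x z0 z0) by rewrite tM.
have [Y Z] := (concat_pathP xP (esym xM), concat_pathP xP tx).
exists (concat_path M x), (concat_path t x); split=> //.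
apply: path_eq_of_init => [||q]; [by case: Y | by case: Z |].
exists (addN (deg M) (addN b q)); first by solve_leN.
rewrite (is_concat_init _ Y xP).2 Mt //.
have -> : addN (deg M) (addN b q) = addN (deg t) (addN (deg M) q).
  by rewrite dt; solve_NN_eq.
by rewrite (is_concat_init _ Z xP).2.
Qed.

End InfinitePaths.

Section StronglyConnected.
Variables (k : nat) (L : kgraph k).
Hypothesis L_colours : no_empty_colours L.
Hypothesis L_connected : strongly_connected L.
Local Notation mor := (mor L).
Local Notation vert := (vert L).
Local Notation z0 := (zeroN k).
Implicit Types (l M t : mor) (w : vert) (a b m n p q : NN k) (x y : NN k -> NN k -> mor).

Lemma exists_rng_deg_pos w : exists l, rng l = w /\ forall i, 0 < deg l i.
Proof.
suff /(_ k (leqnn k)) [l [wl pos]] : forall j, j <= k ->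
    exists l, rng l = w /\ forall i : 'I_k, i < j -> 0 < deg l i.
  by exists l; split=> // i; apply: pos.
elim=> [|j IH] jk; first by exists (idm w); rewrite rng_idm.
have [l [wl pos]] := IH (ltnW jk).
have [e de] := L_colours (Ordinal jk).
have [c [lc ce]] := L_connected (src l) (rng e).
exists (kcomp (kcomp l c) e); split; first by rewrite !rng_comp ?src_comp.
move=> i ij; rewrite !deg_comp ?src_comp // de !ffunE.
have [ij'|ji] := ltnP i j; first by have := pos i ij'; lia.
have -> : Ordinal jk == i by apply/eqP/val_inj => /=; lia.
lia.
Qed.

Definition pos_path w : mor :=
  epsilon (inhabits (idm w)) (fun l => rng l = w /\ forall i, 0 < deg l i).

Lemma pos_pathP w : rng (pos_path w) = w /\ forall i, 0 < deg (pos_path w) i.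
Proof.
apply: (epsilon_spec _ (fun l : mor => rng l = w /\ forall i, 0 < deg l i)).
exact: exists_rng_deg_pos.
Qed.

Fixpoint long_path w j : mor :=
  if j is j'.+1 then kcomp (long_path w j') (pos_path (src (long_path w j')))
  else idm w.

Lemma long_pathP w j : rng (long_path w j) = w /\ forall i, j <= deg (long_path w j) i.
Proof.
elim: j => [|j [wj dj]] /=; first by rewrite rng_idm.
have [wp dp] := pos_pathP (src (long_path w j)).
split=> [|i]; first by rewrite rng_comp.
by rewrite deg_comp // ffunE; have := dj i; have := dp i; lia.
Qed.

Lemma long_path_prefix w j d : exists2 h, src (long_path w j) = rng h &
  long_path w (j + d) = kcomp (long_path w j) h.
Proof.
elim: d => [|d [h jh e]].
  by exists (idm (src (long_path w j))); rewrite ?addn0 ?rng_idm ?comp_idr.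
rewrite addnS /= e.
have [hp _] := pos_pathP (src (kcomp (long_path w j) h)).
exists (kcomp h (pos_path (src (kcomp (long_path w j) h)))).
  by rewrite rng_comp // hp src_comp.
by rewrite comp_assoc // hp src_comp.
Qed.

Lemma seg_long_path w j j' p q : leN p q ->
  (forall i, q i <= j) -> (forall i, q i <= j') ->
  seg (long_path w j) p q = seg (long_path w j') p q.
Proof.
move=> pq qj qj'.
have to_sum j0 d : (forall i, q i <= j0) ->
    seg (long_path w (j0 + d)) p q = seg (long_path w j0) p q.
  move=> qj0; have [h jh ->] := long_path_prefix w j0 d.
  rewrite seg_kcomp_left // => i.
  by have [_ dj] := long_pathP w j0; have := dj i; have := qj0 i; lia.
by rewrite -(to_sum j j' qj) addnC to_sum.
Qed.

Definition maxN q : nat := \max_(i < k) q i.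

Definition path_from w : NN k -> NN k -> mor :=
  fun p q => seg (long_path w (maxN q)) p q.

Lemma path_fromP w : infpath (path_from w) /\ rng (path_from w z0 z0) = w.
Proof.
have qmax q i : q i <= maxN q by apply: (leq_bigmax (F := fun i => q i)).
have q_long q : leN q (deg (long_path w (maxN q))).
  by move=> i; have [_ dj] := long_pathP w (maxN q); apply: leq_trans (dj i).
split; last by rewrite /path_from rng_seg0 //; case: (long_pathP w (maxN z0)).
split=> [m n mn | m | m n p mn np]; rewrite /path_from.
- exact: seg_deg.
- by apply: deg0_idm; rewrite seg_deg //; solve_NN_eq.
- rewrite (@seg_long_path w (maxN n) (maxN p) m n) //; first exact: seg_split.
  by move=> i; apply: leq_trans (np i) (qmax p i).
Qed.

Lemma exists_infpath_at w : exists x, infpath x /\ rng (x z0 z0) = w.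
Proof. by exists (path_from w); apply: path_fromP. Qed.

Lemma exists_src_deg w n : exists l, src l = w /\ deg l = n.
Proof.
have [xP _] := path_fromP w; set f := path_from w z0 n.
have df : deg f = n by rewrite infpath_deg ?subN0 //; apply: le0N.
have [c [/esym fc cw]] := L_connected (src f) w.
have dfc : deg (kcomp f c) = addN (deg c) n by rewrite deg_comp // df; solve_NN_eq.
have [a [l [al _ dl e]]] := factor_exists dfc.
by exists l; rewrite -cw -(src_comp fc) e src_comp.
Qed.

(* Prepend nu of degree n: by periodicity the segment (m, m + n) of nu x is
   x(0, n), and it lies inside (nu x)(0, n + m) = nu x(0, m). *)
Lemma periodic_pair_init m n x y : periodic_pair L m n ->
  infpath x -> infpath y -> x z0 m = y z0 m -> x z0 n = y z0 n.
Proof.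
move=> mn xP yP xy.
have rxy : rng (x z0 z0) = rng (y z0 z0).
  by rewrite -(infpath_rng m xP) xy infpath_rng.
have [nu [snu dnu]] := exists_src_deg (rng (x z0 z0)) n.
have nuy : src nu = rng (y z0 z0) by rewrite snu.
have X := concat_pathP xP snu; have Y := concat_pathP yP nuy.
have [[XP _ _] [YP _ _]] := (X, Y).
have mn_nm : leN (addN m n) (addN (deg nu) m) by rewrite dnu; solve_leN.
rewrite -(periodic_concat_shift n (periodic_pair_sym mn) X dnu).
rewrite -(periodic_concat_shift n (periodic_pair_sym mn) Y dnu).
rewrite -(infpath_seg XP (leN_addr m n) mn_nm) -(infpath_seg YP (leN_addr m n) mn_nm).
by rewrite (is_concat_init m X xP).2 (is_concat_init m Y yP).2 xy.
Qed.

Lemma periodic_pair_addrK m n p :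
  periodic_pair L (addN m p) (addN n p) -> periodic_pair L m n.
Proof.
move=> mnp x xP r s rs.
have [l [sl dl]] := exists_src_deg (rng (x z0 z0)) p.
have [yP _ ys] := concat_pathP xP sl.
have shift a u : addN (deg l) (addN a u) = addN (addN a p) u by rewrite dl; solve_NN_eq.
have ars a : leN (addN a r) (addN a s) by solve_leN.
by rewrite -!ys // !shift mnp //; solve_leN.
Qed.

Lemma periodic_pair_diff m n p q : periodic_pair L m n ->
  diffZ p q = diffZ m n -> periodic_pair L p q.
Proof.
move=> mn pq_mn.
have pqi i : (p i + n i = q i + m i)%N.
  by have := congr1 (fun z : ZZ k => z i) pq_mn; rewrite !ffunE /=; lia.
pose c : NN k := [ffun i => m i - p i].
pose d : NN k := [ffun i => p i - m i].
apply: (periodic_pair_addrK (p := c)).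
have -> : addN p c = addN m d by solve_NN_eq.
have -> : addN q c = addN n d by apply/ffunP => i; have := pqi i; rewrite !ffunE; lia.
exact: periodic_pair_addr.
Qed.

Lemma theta_prop_uniq a b M t1 t2 :
  theta_prop a b M t1 -> theta_prop a b M t2 -> t1 = t2.
Proof.
move=> t1P t2P; have [x [xP xM]] := exists_infpath_at (src M).
have [s1 e1] := theta_prop_kcomp z0 t1P xP xM.
have [s2 e2] := theta_prop_kcomp z0 t2P xP xM.
have dt : deg t1 = deg t2 by rewrite t1P.1 t2P.1.
by case: (kcomp_inj s1 s2 dt erefl (etrans (esym e1) e2)).
Qed.

Lemma thetaE a b M t : theta_prop a b M t -> theta L a b M = t.
Proof.
move=> tP; apply: (theta_prop_uniq _ tP); rewrite /theta.
by apply: (epsilon_spec _ (theta_prop a b M)); exists t.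
Qed.

Lemma theta_prop_ends a b M t : theta_prop a b M t -> rng t = rng M /\ src t = src M.
Proof.
move=> tP; have [x [xP xM]] := exists_infpath_at (src M).
have [st e] := theta_prop_kcomp z0 tP xP xM.
have sM : src M = rng (x z0 (addN b z0)) by rewrite infpath_rng.
by rewrite st infpath_rng // xM -(rng_comp st) -e rng_comp.
Qed.

Lemma theta_prop_exists m n mu : periodic_pair L m n -> deg mu = m ->
  exists t, theta_prop m n mu t.
Proof.
move=> mn dmu; have [x0 [x0P x0mu]] := exists_infpath_at (src mu).
have Y0 := concat_pathP x0P (esym x0mu); have [Y0P Y0mu _] := Y0.
exists (concat_path mu x0 z0 n); apply: theta_propI.
- by rewrite infpath_deg ?subN0 //; apply: le0N.
- have [-> _] := infpath_comp Y0P (le0N n) (leNN n).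
  by have := periodic_concat_shift z0 mn Y0 dmu; rewrite addN0 => ->.
move=> x xP xmu Q; have Y := concat_pathP xP (esym xmu); have [YP Ymu _] := Y.
rewrite -(is_concat_init _ Y xP).2.
have -> : addN (deg mu) (addN n Q) = addN n (addN (deg mu) Q) by solve_NN_eq.
have [_ ->] := infpath_comp YP (le0N n) (leN_addr n (addN (deg mu) Q)).
rewrite (periodic_concat_shift _ mn Y dmu); congr kcomp.
by apply: (periodic_pair_init mn YP Y0P); rewrite -dmu Ymu Y0mu.
Qed.

Lemma theta_kcompl m n mu alpha : periodic_pair L m n -> deg mu = m ->
  src alpha = rng mu ->
  theta L (addN (deg alpha) m) (addN (deg alpha) n) (kcomp alpha mu)
  = kcomp alpha (theta L m n mu).
Proof.
move=> mn dmu amu; have [t tP] := theta_prop_exists mn dmu.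
rewrite (thetaE tP); apply: thetaE; have [[rt st] dt] := (theta_prop_ends tP, tP.1).
have alpha_t : src alpha = rng t by rewrite rt.
apply: theta_propI; first by rewrite deg_comp // dt.
  by rewrite !src_comp // st.
move=> x xP; rewrite src_comp // => xmu Q.
have [tx e] := theta_prop_kcomp (addN (deg alpha) Q) tP xP xmu.
have mux : src mu = rng (x z0 (addN n (addN (deg alpha) Q))) by rewrite infpath_rng.
have -> : addN (addN (deg alpha) n) Q = addN n (addN (deg alpha) Q) by solve_NN_eq.
have -> : addN (deg (kcomp alpha mu)) Q = addN (deg mu) (addN (deg alpha) Q).
  by rewrite deg_comp //; solve_NN_eq.
by rewrite -!comp_assoc // e.
Qed.

Lemma theta_kcompr m n mu beta : periodic_pair L m n -> deg mu = m ->
  rng beta = src mu ->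
  theta L (addN m (deg beta)) (addN n (deg beta)) (kcomp mu beta)
  = kcomp (theta L m n mu) beta.
Proof.
move=> mn dmu bmu; have [t tP] := theta_prop_exists mn dmu.
rewrite (thetaE tP); apply: thetaE; have [[_ st] dt] := (theta_prop_ends tP, tP.1).
have tb : src t = rng beta by rewrite st.
apply: theta_propI; first by rewrite deg_comp // dt.
  by rewrite !src_comp.
move=> x xP; rewrite src_comp // => xb Q.
have X := concat_pathP xP (esym xb); have [XP Xb _] := X.
have Xmu : rng (concat_path beta x z0 z0) = src mu.
  by rewrite -(infpath_rng (deg beta) XP) Xb.
pose Q' := addN (deg beta) (addN (deg beta) Q).
have [_ e] := theta_prop_kcomp Q' tP XP Xmu.
have [_ eb] := is_concat_init (addN (addN n (deg beta)) Q) X xP.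
have [_ et] := is_concat_init (addN (deg (kcomp mu beta)) Q) X xP.
have sbx R : src beta = rng (x z0 R) by rewrite infpath_rng.
rewrite -!comp_assoc ?sbx // -eb -et.
have -> : addN (deg beta) (addN (addN n (deg beta)) Q) = addN n Q' by solve_NN_eq.
have -> : addN (deg beta) (addN (deg (kcomp mu beta)) Q) = addN (deg mu) Q'.
  by rewrite deg_comp //; solve_NN_eq.
exact: e.
Qed.

End StronglyConnected.

Theorem proposition5p2 (k : nat) (L : kgraph k)
  (Hconv : no_empty_colours L) (Hfin : finite_kgraph L)
  (Hsc : strongly_connected L) :
  (forall m n p q : NN k, periodic_pair L m n ->
      diffZ p q = diffZ m n -> periodic_pair L p q) /\
  is_subgroup (Per L) /\
  (forall (m n : NN k) (mu : mor L), Per L (diffZ m n) -> deg mu = m ->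
     (forall alpha : mor L, src alpha = rng mu ->
        theta L (addN (deg alpha) m) (addN (deg alpha) n) (kcomp alpha mu)
        = kcomp alpha (theta L m n mu)) /\
     (forall beta : mor L, rng beta = src mu ->
        theta L (addN m (deg beta)) (addN n (deg beta)) (kcomp mu beta)
        = kcomp (theta L m n mu) beta)).
Proof.
split; [exact: periodic_pair_diff | split; first exact: Per_subgroup].
move=> m n mu [m' [n' [mn_diff mn'P]]] dmu.
have mnP := periodic_pair_diff Hconv Hsc mn'P mn_diff.
by split=> [alpha | beta]; [apply: theta_kcompl | apply: theta_kcompr].
Qed.
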